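(* Let $n\ge1$ and $p$ a prime. For $m\ge1$ let $Y_m$ be the subspace of $\Sigma(n,p)$ spanned by all $\overline{B}_q$ where $q$ has at least $m$ components, and let $\mathcal{T}$ be the subspace of $\Sigma(n,p)$ spanned by all $\overline{B}_q-\overline{B}_r$ with $q\approx r$. Then: (1) if $n$ is odd or $p\ne2$, then $\mathcal{R}(n,p)\subseteq (Y_2\cap\mathcal{T})+Y_3$; (2) if $n$ is even and $p=2$, then $\mathcal{R}(n,p)\subseteq \langle\overline{B}_{[n/2,n/2]}\rangle+(Y_2\cap\mathcal{T})+Y_3$.
   Context: A composition of $n$ is a sequence of positive integers with sum $n$; $q\approx r$ means $r$ is a reordering of the components of $q$. The descent algebra $\Sigma_n$ has basis $\{B_q\}$ indexed by compositions of $n$ with multiplication $B_qB_r=\sum_{Z\in S(q,r)}B_{c(Z)}$, where for $q=[a_1,\dots,a_s]$, $r=[b_1,\dots,b_t]$, $S(q,r)$ is the set of $s\times t$ non-negative integer matrices with row sums $a_i$ and column sums $b_j$, and $c(Z)$ is the composition obtained by reading the entries of $Z$ row by row and omitting zeros. Let $\mathcal{Z}_n$ be the subring of integral combinations of the $B_q$ and $\Sigma(n,p)=\mathcal{Z}_n/p\mathcal{Z}_n$, an $\mathbb{F}_p$-algebra with basis $\overline{B}_q$ (images of $B_q$); $\mathcal{R}(n,p)$ denotes its (Jacobson) radical. *)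

From HB Require Import structures.
From mathcomp Require Import all_boot all_order all_algebra.
Set Implicit Arguments. Unset Strict Implicit. Unset Printing Implicit Defensive.
Import Order.TTheory GRing.Theory Num.Theory.
Local Open Scope ring_scope.

Definition is_comp (n : nat) (s : seq nat) : bool :=
  all (fun a => 0 < a)%N s && (sumn s == n).

Fixpoint bseqs (n l : nat) : seq (seq nat) :=
  match l with
  | 0 => [:: [::]]
  | l'.+1 => [::] :: [seq a :: s | a <- iota 1 n, s <- bseqs n l']
  end.

Definition compos (n : nat) : seq (seq nat) :=
  undup [seq s <- bseqs n n | is_comp n s].

Lemma bseqs_mem n l s :
  all (fun a => (0 < a <= n)%N) s -> (size s <= l)%N -> s \in bseqs n l.
Proof.
elim: l s => [|l IH] [|a s] //= /andP[/andP[a0 an] Hs] Hl.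
rewrite in_cons /=; apply/allpairsP; exists (a, s) => /=; split=> //.
  by rewrite mem_iota a0 /= add1n ltnS.
exact: IH.
Qed.

Lemma mem_compos n s : (s \in compos n) = is_comp n s.
Proof.
rewrite /compos mem_undup mem_filter andbC.
case Hc: (is_comp n s); rewrite ?andbF ?andbT //.
move/andP: Hc => [Hp /eqP Hn].
apply: (@bseqs_mem n n s); rewrite -Hn; clear Hn.
- elim: s Hp => //= a s IH /andP[a0 Hp]; rewrite a0 leq_addr /=.
  apply: (sub_all _ (IH Hp)) => b /andP[b0 bs]; rewrite b0 /=.
  exact: (leq_trans bs (leq_addl _ _)).
- elim: s Hp => //= a s IH /andP[a0 Hp].
  by rewrite -add1n; apply: leq_add; last exact: IH.
Qed.

Notation Comp n := (seq_sub (compos n)).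

(* s x t matrices of non-negative integers (entries bounded by n, which is no
   restriction for matrices with row sums the parts of a composition of n) *)
Definition Smat (n : nat) (q r : seq nat) :=
  {ffun 'I_(size q) * 'I_(size r) -> 'I_n.+1}.

Definition inS n q r (Z : Smat n q r) : bool :=
  [forall i : 'I_(size q), (\sum_(j < size r) (Z (i, j) : nat))%N == nth 0%N q i] &&
  [forall j : 'I_(size r), (\sum_(i < size q) (Z (i, j) : nat))%N == nth 0%N r j].

Definition cZ n q r (Z : Smat n q r) : seq nat :=
  [seq a <- flatten [seq [seq (Z (i, j) : nat) | j <- enum 'I_(size r)]
                    | i <- enum 'I_(size q)] | a != 0%N].

Definition Ncoef n (q r s : seq nat) : nat :=
  #|[pred Z : Smat n q r | inS Z && (cZ Z == s)]|.

(* elements: F_p-linear combinations of the basis \bar B_q, q composition of n *)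
Definition Sig (n p : nat) := {ffun Comp n -> ('F_p)^o}.

(* \bar B_s (zero if s is not a composition of n) *)
Definition Bbar (n p : nat) (s : seq nat) : Sig n p :=
  [ffun q : Comp n => (val q == s)%:R].

(* multiplication: B_q B_r = sum_{Z in S(q,r)} B_{c(Z)}, extended bilinearly *)
Definition mulS (n p : nat) (x y : Sig n p) : Sig n p :=
  [ffun s : Comp n => \sum_(q : Comp n) \sum_(r : Comp n)
       x q * y r * (Ncoef n (val q) (val r) (val s))%:R].

Definition oneS (n p : nat) : Sig n p := Bbar n p [:: n].

(* Jacobson radical: x in R(n,p) iff 1 - y x is a unit for every y *)
Definition in_rad (n p : nat) (x : Sig n p) : Prop :=
  forall y : Sig n p, exists z : Sig n p,
    mulS z (oneS n p - mulS y x) = oneS n p /\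
    mulS (oneS n p - mulS y x) z = oneS n p.

Definition Ysp (n p m : nat) : {vspace Sig n p} :=
  span [seq Bbar n p (val q) | q <- [seq q <- enum {: Comp n} | (m <= size (val q))%N]].

Definition Tsp (n p : nat) : {vspace Sig n p} :=
  span [seq Bbar n p (val qr.1) - Bbar n p (val qr.2)
       | qr <- [seq qr <- enum {: Comp n * Comp n} | perm_eq (val qr.1) (val qr.2)]].

From HB Require Import structures.
From mathcomp Require Import all_boot all_order all_algebra zify.
Set Implicit Arguments. Unset Strict Implicit. Unset Printing Implicit Defensive.
Import Order.TTheory GRing.Theory Num.Theory.

(* For 0 <= a <= n, counting how a composition reads as [n], [a, n - a] or
   [n - a, a] defines a linear form chi_a on Sigma(n,p) which is an algebra
   homomorphism to F_p. Since c(Z) has at least as many parts as q and as r,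
   multiplicativity only has to be checked on compositions with at most two
   parts, and for two two-part compositions the only tables Z producing two
   parts are the diagonal and the antidiagonal one. A homomorphism to a field
   vanishes on the radical: chi_0 kills the coefficient of B[n] and chi_a gives
   x[a, n - a] + x[n - a, a] = 0. Hence a radical element is a combination of
   differences B[a, b] - B[b, a], which lie in Y_2 and T, of elements of Y_3,
   and of B[m, m] when n = 2m; the coefficient c of the latter has 2c = 0, so
   it vanishes unless p = 2. *)

Lemma sum_nth_sumn (s : seq nat) : (\sum_(i < size s) nth 0 s i)%N = sumn s.
Proof. by rewrite sumnE (big_nth 0) big_mkord. Qed.

Lemma sumn_filter_neq0 (s : seq nat) : sumn [seq a <- s | a != 0%N] = sumn s.
Proof. by elim: s => //= a s IH; case: (eqVneq a 0%N) => [->|]; rewrite /= IH. Qed.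

Lemma filter_neq0_comp n s : is_comp n s -> [seq a <- s | a != 0%N] = s.
Proof. by case/andP=> /allP Hs _; apply/all_filterP/allP => a /Hs; case: a. Qed.

Lemma is_comp_nth_gt0 n s i : is_comp n s -> (i < size s)%N -> (0 < nth 0 s i)%N.
Proof. by case/andP => /allP Hs _ Hi; apply: Hs; rewrite mem_nth. Qed.

Lemma is_comp_nth_ltS n s i : is_comp n s -> (nth 0 s i < n.+1)%N.
Proof.
case/andP=> _ /eqP <-; rewrite ltnS.
elim: s i => [|a s IH] [|i] //=; first exact: leq_addr.
exact: leq_trans (IH i) (leq_addl _ _).
Qed.

Lemma sumn_support1 (T : finType) (W : T) (F : T -> nat) :
  (forall Z, Z != W -> F Z = 0%N) -> (\sum_Z F Z)%N = F W.
Proof. by move=> F0; rewrite (bigD1 W) //= big1 ?addn0. Qed.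

Lemma sumn_support2 (T : finType) (W1 W2 : T) (F : T -> nat) : W1 != W2 ->
  (forall Z, Z != W1 -> Z != W2 -> F Z = 0%N) -> (\sum_Z F Z)%N = (F W1 + F W2)%N.
Proof.
move=> W12 F0; rewrite (bigD1 W1) //= (bigD1 W2) 1?eq_sym //= big1 ?addn0 // => Z.
by case/andP => ZW1 ZW2; apply: F0.
Qed.

Section ContingencyTables.
Variables (n : nat) (q r : seq nat).
Implicit Type Z : Smat n q r.

Lemma size_cZ Z :
  size (cZ Z) = (\sum_(i < size q) \sum_(j < size r) (Z (i, j) != 0 :> nat))%N.
Proof.
rewrite /cZ size_filter count_flatten -map_comp sumnE big_map big_enum /=.
by apply: eq_bigr => i _; rewrite -sumn_count -map_comp sumnE big_map big_enum.
Qed.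

Lemma sumn_cZ Z :
  sumn (cZ Z) = (\sum_(i < size q) \sum_(j < size r) (Z (i, j) : nat))%N.
Proof.
rewrite /cZ sumn_filter_neq0 sumn_flatten -map_comp sumnE big_map big_enum /=.
by apply: eq_bigr => i _; rewrite sumnE big_map big_enum.
Qed.

Lemma cZ_is_comp Z : is_comp n q -> inS Z -> is_comp n (cZ Z).
Proof.
move=> Hq /andP[/forallP rowZ _]; apply/andP; split.
  by rewrite all_filter; apply/allP => -[].
rewrite sumn_cZ (eq_bigr (fun i : 'I_(size q) => nth 0 q i)) => [|i _]; last exact/eqP.
by rewrite sum_nth_sumn; case/andP: Hq.
Qed.

(* Every row and column of Z has a positive sum, hence a nonzero entry. *)
Lemma leq_size_cZ Z : is_comp n q -> is_comp n r -> inS Z ->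
  (size q <= size (cZ Z))%N /\ (size r <= size (cZ Z))%N.
Proof.
move=> Hq Hr /andP[/forallP rowZ /forallP colZ]; rewrite size_cZ.
have nz_line (J : finType) (z : J -> nat) :
  (0 < \sum_j z j)%N -> (0 < \sum_j (z j != 0 :> nat))%N.
  rewrite !lt0n; apply: contra; rewrite sum_nat_eq0 => /forallP z0.
  by apply/eqP/big1 => j _; have := z0 j; case: (z j).
split; rewrite -[X in (X <= _)%N]card_ord -sum1_card; last rewrite exchange_big /=.
  apply: leq_sum => i _; apply: nz_line.
  by rewrite (eqP (rowZ i)) (is_comp_nth_gt0 Hq).
apply: leq_sum => j _; apply: nz_line.
by rewrite (eqP (colZ j)) (is_comp_nth_gt0 Hr).
Qed.

End ContingencyTables.

Lemma enum_ord1 : enum 'I_1 = [:: ord0].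
Proof. by apply: (inj_map val_inj); rewrite val_enum_ord. Qed.

Lemma map_nth_enum_ord (s : seq nat) : [seq nth 0 s (val j) | j <- enum 'I_(size s)] = s.
Proof. by rewrite (map_comp (nth 0 s) val) val_enum_ord -/(mkseq _ _) mkseq_nth. Qed.

Section SingleLine.
Variables (n : nat) (s : seq nat).
Hypothesis s_comp : is_comp n s.

Definition row_table : Smat n [:: n] s :=
  [ffun ij : 'I_1 * 'I_(size s) => inord (nth 0 s ij.2)].
Definition col_table : Smat n s [:: n] :=
  [ffun ij : 'I_(size s) * 'I_1 => inord (nth 0 s ij.1)].

Let sum_s : (\sum_(j < size s) nth 0 s j)%N = n.
Proof. by rewrite sum_nth_sumn; case/andP: s_comp => _ /eqP. Qed.

Lemma row_tableE i j : (row_table (i, j) : nat) = nth 0 s j.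
Proof. by rewrite ffunE inordK // (is_comp_nth_ltS _ s_comp). Qed.

Lemma col_tableE i j : (col_table (i, j) : nat) = nth 0 s i.
Proof. by rewrite ffunE inordK // (is_comp_nth_ltS _ s_comp). Qed.

Lemma inS_row Z : inS Z = (Z == row_table).
Proof.
apply/idP/eqP => [/andP[_ /forallP colZ]|->].
  apply/ffunP => -[i j]; apply: val_inj; rewrite /= row_tableE.
  by have := colZ j; rewrite big_ord1 (ord1 i) => /eqP.
apply/andP; split; apply/forallP => i; last by rewrite big_ord1 row_tableE.
by rewrite (ord1 i) (eq_bigr _ (fun j _ => row_tableE _ j)) sum_s.
Qed.

Lemma inS_col Z : inS Z = (Z == col_table).
Proof.
apply/idP/eqP => [/andP[/forallP rowZ _]|->].
  apply/ffunP => -[i j]; apply: val_inj; rewrite /= col_tableE.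
  by have := rowZ i; rewrite big_ord1 (ord1 j) => /eqP.
apply/andP; split; apply/forallP => i; first by rewrite big_ord1 col_tableE.
by rewrite (ord1 i) (eq_bigr _ (fun j _ => col_tableE j _)) sum_s.
Qed.

Lemma cZ_row_table : cZ row_table = s.
Proof.
rewrite /cZ /= enum_ord1 /= cats0 (eq_map (row_tableE ord0)) map_nth_enum_ord.
exact: filter_neq0_comp s_comp.
Qed.

Lemma cZ_col_table : cZ col_table = s.
Proof.
rewrite /cZ /= enum_ord1 /= (eq_map (fun i => congr1 (cons^~ [::]) (col_tableE i ord0))).
by rewrite flatten_map1 map_nth_enum_ord (filter_neq0_comp s_comp).
Qed.

Lemma sum_inS_row (f : seq nat -> nat) :
  (\sum_(Z : Smat n [:: n] s) inS Z * f (cZ Z))%N = f s.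
Proof.
rewrite (sumn_support1 (W := row_table)) => [|Z]; last by rewrite inS_row => /negbTE ->.
by rewrite inS_row eqxx cZ_row_table mul1n.
Qed.

Lemma sum_inS_col (f : seq nat -> nat) :
  (\sum_(Z : Smat n s [:: n]) inS Z * f (cZ Z))%N = f s.
Proof.
rewrite (sumn_support1 (W := col_table)) => [|Z]; last by rewrite inS_col => /negbTE ->.
by rewrite inS_col eqxx cZ_col_table mul1n.
Qed.

End SingleLine.

Definition o0 : 'I_2 := ord0.
Definition o1 : 'I_2 := @Ordinal 2 1 isT.

Lemma ord2P (P : 'I_2 -> Prop) : P o0 -> P o1 -> forall i, P i.
Proof.
move=> P0 P1 [[|[|i]] Hi] //.
  by rewrite (_ : Ordinal Hi = o0) //; apply: val_inj.
by rewrite (_ : Ordinal Hi = o1) //; apply: val_inj.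
Qed.

Lemma forall_ord2 (P : pred 'I_2) : [forall i, P i] = P o0 && P o1.
Proof.
by apply/forallP/andP => [HP | [P0 P1]]; [split; apply: HP | apply: ord2P].
Qed.

Lemma sum_ord2 (F : 'I_2 -> nat) : (\sum_(i < 2) F i = F o0 + F o1)%N.
Proof. by rewrite !big_ord_recl big_ord0 addn0; congr (F _ + F _); apply: val_inj. Qed.

Lemma enum_ord2 : enum 'I_2 = [:: o0; o1].
Proof. by apply: (inj_map val_inj); rewrite val_enum_ord. Qed.

Lemma filter_neq0_size_le2 (z00 z01 z10 z11 : nat) :
  (0 < z00 + z01 -> 0 < z10 + z11 -> 0 < z00 + z10 -> 0 < z01 + z11 ->
  size [seq x <- [:: z00; z01; z10; z11] | x != 0] <= 2 ->
  (z01 = 0 /\ z10 = 0) \/ (z00 = 0 /\ z11 = 0))%N.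
Proof. by case: z00 z01 z10 z11 => [|?] [|?] [|?] [|?] /=; lia. Qed.

Section TwoByTwo.
Variables (n a1 a2 b1 b2 : nat).
Hypotheses (a1_gt0 : (0 < a1)%N) (a2_gt0 : (0 < a2)%N).
Hypotheses (b1_gt0 : (0 < b1)%N) (b2_gt0 : (0 < b2)%N).
Hypothesis a12 : (a1 + a2)%N = n.
Implicit Types Z W : Smat n [:: a1; a2] [:: b1; b2].

Lemma inS22 Z : inS Z =
  [&& (Z (o0, o0) + Z (o0, o1) == a1)%N, (Z (o1, o0) + Z (o1, o1) == a2)%N,
      (Z (o0, o0) + Z (o1, o0) == b1)%N & (Z (o0, o1) + Z (o1, o1) == b2)%N].
Proof. by rewrite /inS /= !forall_ord2 !sum_ord2 /= -!andbA. Qed.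

Lemma cZ22 Z : cZ Z = [seq x <- [:: (Z (o0, o0) : nat); (Z (o0, o1) : nat);
                                    (Z (o1, o0) : nat); (Z (o1, o1) : nat)] | x != 0%N].
Proof. by rewrite /cZ /= enum_ord2. Qed.

Lemma table22_eq Z W :
  (Z (o0, o0) : nat) = W (o0, o0) -> (Z (o0, o1) : nat) = W (o0, o1) ->
  (Z (o1, o0) : nat) = W (o1, o0) -> (Z (o1, o1) : nat) = W (o1, o1) -> Z = W.
Proof.
move=> E00 E01 E10 E11; apply/ffunP => -[i j]; apply: val_inj.
by move: i j; apply: ord2P; apply: ord2P.
Qed.

Definition diag_table : Smat n [:: a1; a2] [:: b1; b2] :=
  [ffun ij : 'I_2 * 'I_2 => inord (if ij.1 == ij.2 then nth 0 [:: a1; a2] ij.1 else 0)].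
Definition antidiag_table : Smat n [:: a1; a2] [:: b1; b2] :=
  [ffun ij : 'I_2 * 'I_2 => inord (if ij.1 != ij.2 then nth 0 [:: a1; a2] ij.1 else 0)].

Let inordE k : (k <= a1 + a2 -> @inord n k = k :> nat)%N.
Proof. by move=> Hk; rewrite inordK // ltnS -a12. Qed.

Lemma diag_tableE :
  [/\ (diag_table (o0, o0) : nat) = a1, (diag_table (o0, o1) : nat) = 0%N,
      (diag_table (o1, o0) : nat) = 0%N & (diag_table (o1, o1) : nat) = a2].
Proof. by rewrite !ffunE /= !inordE //; lia. Qed.

Lemma antidiag_tableE :
  [/\ (antidiag_table (o0, o0) : nat) = 0%N, (antidiag_table (o0, o1) : nat) = a1,
      (antidiag_table (o1, o0) : nat) = a2 & (antidiag_table (o1, o1) : nat) = 0%N].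
Proof. by rewrite !ffunE /= !inordE //; lia. Qed.

(* With positive margins, a 2 x 2 table with at most two nonzero entries is
   diagonal or antidiagonal; every other table yields at least three parts. *)
Lemma size_cZ22 Z : inS Z -> Z != diag_table -> Z != antidiag_table ->
  (3 <= size (cZ Z))%N.
Proof.
rewrite inS22 cZ22 => /and4P[/eqP E1 /eqP E2 /eqP E3 /eqP E4] Zd Za.
rewrite leqNgt; apply/negP => /(filter_neq0_size_le2); case; try lia.
- case=> E01 E10; case/eqP: Zd; have [D00 D01 D10 D11] := diag_tableE.
  by apply: table22_eq; lia.
- case=> E00 E11; case/eqP: Za; have [D00 D01 D10 D11] := antidiag_tableE.
  by apply: table22_eq; lia.
Qed.

Lemma sum_inS22 (f : seq nat -> nat) : (forall c, 3 <= size c -> f c = 0)%N ->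
  (\sum_(Z : Smat n [:: a1; a2] [:: b1; b2]) inS Z * f (cZ Z) =
   (((a1 == b1) && (a2 == b2)) + ((a1 == b2) && (a2 == b1))) * f [:: a1; a2])%N.
Proof.
move=> f0; have [D00 D01 D10 D11] := diag_tableE.
have [A00 A01 A10 A11] := antidiag_tableE.
rewrite (sumn_support2 (W1 := diag_table) (W2 := antidiag_table)); first last.
- move=> Z Zd Za; case: (boolP (inS Z)) => [SZ|//].
  by rewrite f0 ?muln0 // size_cZ22.
- by apply/eqP => /(congr1 (fun Z => Z (o0, o0) : nat)); rewrite D00 A00; lia.
rewrite mulnDl !inS22 !cZ22 D00 D01 D10 D11 A00 A01 A10 A11 /=.
rewrite (negbTE (lt0n_neq0 a1_gt0)) (negbTE (lt0n_neq0 a2_gt0)) /=.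
by rewrite !addn0 !add0n !eqxx /= [(a2 == b1) && _]andbC.
Qed.

End TwoByTwo.

(* Solomon's character of the descent algebra at a permutation of cycle type
   (a, n - a), or an n-cycle when a = 0: it counts the assignments of the
   cycles to the blocks of a composition matching the block sizes. *)
Definition theta (n a : nat) (c : seq nat) : nat :=
  ((c == [:: n]) + (c == [:: a; n - a]) + (c == [:: n - a; a]))%N.

Lemma theta_size_ge3 n a c : (3 <= size c)%N -> theta n a c = 0%N.
Proof. by case: c => [|x [|y [|z c]]] //= _; rewrite /theta !eqseq_cons !andbF. Qed.

Lemma theta_n n a : theta n a [:: n] = 1%N.
Proof. by rewrite /theta eqxx /= !eqseq_cons !andbF. Qed.

Lemma theta22 n a a1 a2 b1 b2 :
  (theta n a [:: a1; a2] * (((a1 == b1) && (a2 == b2)) + ((a1 == b2) && (a2 == b1))) =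
   theta n a [:: a1; a2] * theta n a [:: b1; b2])%N.
Proof.
rewrite /theta !eqseq_cons !andbF !andbT /= !add0n.
have [/andP[/eqP-> /eqP->]|_] := boolP ((a1 == a) && (a2 == n - a));
  last have [/andP[/eqP-> /eqP->]|_ //] := boolP ((a1 == n - a) && (a2 == a)).
all: rewrite ![b1 == _]eq_sym ![b2 == _]eq_sym.
all: by case: (a == b1); case: (a == b2); case: (n - a == b1); case: (n - a == b2).
Qed.

Lemma sum_theta_cZ_large n a q r : is_comp n q -> is_comp n r ->
  (3 <= maxn (size q) (size r))%N ->
  (\sum_(Z : Smat n q r) inS Z * theta n a (cZ Z))%N = 0%N.
Proof.
move=> Hq Hr large; apply: big1 => Z _; have [SZ|//] := boolP (inS Z).
rewrite theta_size_ge3 ?muln0 // (leq_trans large) // geq_max.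
by have [-> ->] := leq_size_cZ Hq Hr SZ.
Qed.

Lemma theta_mul n a q r : (0 < n)%N -> is_comp n q -> is_comp n r ->
  (\sum_(Z : Smat n q r) inS Z * theta n a (cZ Z) = theta n a q * theta n a r)%N.
Proof.
move=> n_gt0 Hq Hr; have [large|] := leqP 3 (maxn (size q) (size r)).
  rewrite sum_theta_cZ_large //.
  by move: large; rewrite leq_max => /orP[] /theta_size_ge3 ->; rewrite ?muln0.
rewrite gtn_max => /andP[q_lt3 r_lt3].
have sum_n s : is_comp n s -> sumn s = n by case/andP => _ /eqP.
case: q Hq q_lt3 => [|a1 [|a2 [|? ?]]] Hq // _; first by move: (sum_n _ Hq) n_gt0 => <-.
  move: (sum_n _ Hq) => /= /[!addn0] a1n; subst a1.
  by rewrite sum_inS_row // theta_n mul1n.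
case: r Hr r_lt3 => [|b1 [|b2 [|? ?]]] Hr // _; first by move: (sum_n _ Hr) n_gt0 => <-.
  move: (sum_n _ Hr) => /= /[!addn0] b1n; subst b1.
  by rewrite (sum_inS_col Hq) theta_n muln1.
have a12 : (a1 + a2)%N = n by rewrite -(sum_n _ Hq) /= addn0.
rewrite (sum_inS22 (is_comp_nth_gt0 (i := 0) Hq isT) (is_comp_nth_gt0 (i := 1) Hq isT)
                  (is_comp_nth_gt0 (i := 0) Hr isT) (is_comp_nth_gt0 (i := 1) Hr isT) a12).
  by rewrite mulnC theta22.
exact: theta_size_ge3.
Qed.

Lemma sum_Ncoef n q r (f : seq nat -> nat) : is_comp n q ->
  (\sum_(s : Comp n) Ncoef n q r (val s) * f (val s) =
   \sum_(Z : Smat n q r) inS Z * f (cZ Z))%N.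
Proof.
move=> Hq; rewrite /Ncoef.
under eq_bigr => s _ do rewrite -sum1_card big_distrl /= big_mkcond /=.
rewrite exchange_big /=; apply: eq_bigr => Z _.
have [SZ|NZ] /= := boolP (inS Z); last first.
  by rewrite big1 // => s _; rewrite inE /= (negbTE NZ).
have cZ_mem : cZ Z \in compos n by rewrite mem_compos (cZ_is_comp Hq SZ).
rewrite mul1n (bigD1 (SeqSub cZ_mem)) //= inE /= SZ eqxx mul1n big1 ?addn0 // => s Hs.
by rewrite inE /= SZ /=; case: eqP => // E; case/eqP: Hs; apply: val_inj.
Qed.

Section Characters.
Variables (n p : nat).
Hypothesis n_gt0 : (0 < n)%N.
Local Open Scope ring_scope.
Implicit Types x y : Sig n p.

Lemma Comp_is_comp (s : Comp n) : is_comp n (val s).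
Proof. by rewrite -mem_compos (ssvalP s). Qed.

Definition coef x (c : seq nat) : 'F_p := \sum_(s : Comp n) x s * (val s == c)%:R.

Definition chi (a : nat) x : 'F_p := \sum_(s : Comp n) x s * (theta n a (val s))%:R.

Lemma coef_val x (s : Comp n) : coef x (val s) = x s.
Proof.
rewrite /coef (bigD1 s) //= eqxx mulr1 big1 ?addr0 // => t ts.
by rewrite (inj_eq val_inj) (negbTE ts) mulr0.
Qed.

Lemma coef_not_comp x c : ~~ is_comp n c -> coef x c = 0.
Proof.
move=> Nc; rewrite /coef big1 // => s _; case: eqP => [sc|]; last by rewrite mulr0.
by case/negP: Nc; rewrite -sc Comp_is_comp.
Qed.

Lemma chi_coef a x :
  chi a x = coef x [:: n] + coef x [:: a; (n - a)%N] + coef x [:: (n - a)%N; a].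
Proof.
by rewrite /chi /coef -!big_split /=; apply: eq_bigr => s _; rewrite /theta !natrD !mulrDr.
Qed.

Lemma chiB a x y : chi a (x - y) = chi a x - chi a y.
Proof. by rewrite /chi -sumrB; apply: eq_bigr => s _; rewrite !ffunE mulrBl. Qed.

Lemma chiZ a c x : chi a (c *: x) = c * chi a x.
Proof. by rewrite /chi mulr_sumr; apply: eq_bigr => s _; rewrite !ffunE mulrA. Qed.

Lemma chi_one a : chi a (oneS n p) = 1.
Proof.
have n_comp : [:: n] \in compos n by rewrite mem_compos /is_comp /= n_gt0 addn0 eqxx.
rewrite /chi (bigD1 (SeqSub n_comp)) //= !ffunE /= eqxx theta_n mul1r.
rewrite big1 ?addr0 // => s sn; rewrite !ffunE; case: eqP => [sn'|]; last by rewrite mul0r.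
by case/eqP: sn; apply: val_inj.
Qed.

Lemma chiM a x y : chi a (mulS x y) = chi a x * chi a y.
Proof.
rewrite /chi /mulS.
under eq_bigr => s _ do rewrite ffunE mulr_suml.
rewrite exchange_big /= mulr_suml; apply: eq_bigr => q _.
under eq_bigr => s _ do rewrite mulr_suml.
rewrite exchange_big /= mulr_sumr; apply: eq_bigr => r _.
have := theta_mul a n_gt0 (Comp_is_comp q) (Comp_is_comp r).
rewrite -sum_Ncoef ?Comp_is_comp // => theta_qr.
rewrite mulrACA -natrM -theta_qr natr_sum mulr_sumr.
by apply: eq_bigr => s _; rewrite natrM !mulrA.
Qed.

(* For y = (chi a x)^-1, 1 - y x is a unit that chi a sends to 0. *)
Lemma chi_rad a x : in_rad x -> chi a x = 0.
Proof.
move=> x_rad; apply/eqP/negPn/negP => chi_x_neq0.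
have [z [z_inv _]] := x_rad ((chi a x)^-1 *: oneS n p).
have := congr1 (chi a) z_inv.
rewrite chiM chiB chiM chiZ !chi_one mulr1 mulVf // subrr mulr0 => /eqP.
by rewrite eq_sym oner_eq0.
Qed.

Lemma coef_n_rad x : in_rad x -> coef x [:: n] = 0.
Proof.
have [c0n cn0] : ~~ is_comp n [:: 0%N; n] /\ ~~ is_comp n [:: n; 0%N].
  by rewrite /is_comp /= andbF.
move=> x_rad; have := chi_rad 0 x_rad.
by rewrite chi_coef subn0 (coef_not_comp x c0n) (coef_not_comp x cn0) !addr0.
Qed.

Lemma rev_Comp_mem (s : Comp n) : rev (val s) \in compos n.
Proof. by rewrite mem_compos /is_comp all_rev sumn_rev -/(is_comp _ _) Comp_is_comp. Qed.

Definition rev_Comp (s : Comp n) : Comp n := SeqSub (rev_Comp_mem s).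

Lemma Comp2E (s : Comp n) : size (val s) = 2%N ->
  val s = [:: nth 0 (val s) 0; (n - nth 0 (val s) 0)%N].
Proof.
have := Comp_is_comp s; case: (val s) => [|a [|b [|? ?]]] //= /andP[_ /eqP <-] _.
by rewrite /= addn0 addKn.
Qed.

Lemma coef_rev_Comp_rad x (s : Comp n) : in_rad x -> size (val s) = 2%N ->
  x s + x (rev_Comp s) = 0.
Proof.
move=> x_rad /Comp2E sE; have := chi_rad (nth 0 (val s) 0) x_rad.
by rewrite chi_coef coef_n_rad // add0r -coef_val -(coef_val x (rev_Comp s)) /= sE.
Qed.

End Characters.

Section RadicalDecomposition.
Variables (n p : nat).
Hypothesis n_gt0 : (0 < n)%N.
Local Open Scope ring_scope.
Implicit Types x : Sig n p.

Definition ascent2 (s : Comp n) :=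
  (size (val s) == 2) && (nth 0 (val s) 0 < nth 0 (val s) 1)%N.
Definition balanced2 (s : Comp n) :=
  (size (val s) == 2) && (nth 0 (val s) 0 == nth 0 (val s) 1).
Definition long_comp (s : Comp n) := (3 <= size (val s))%N.

Definition ascent_part x : Sig n p :=
  \sum_(s | ascent2 s) x s *: (Bbar n p (val s) - Bbar n p (val (rev_Comp s))).
Definition balanced_part x : Sig n p := \sum_(s | balanced2 s) x s *: Bbar n p (val s).
Definition long_part x : Sig n p := \sum_(s | long_comp s) x s *: Bbar n p (val s).

Lemma Bbar_Comp_at (s u : Comp n) : Bbar n p (val s) u = (s == u)%:R.
Proof. by rewrite ffunE (inj_eq val_inj) eq_sym. Qed.

Lemma sum_natr_eq (P : pred (Comp n)) (g : Comp n -> 'F_p) u :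
  \sum_(s | P s) g s * (s == u)%:R = if P u then g u else 0.
Proof.
rewrite big_mkcond (bigD1 u) //= eqxx mulr1 big1 ?addr0 // => s su.
by rewrite (negbTE su) mulr0; case: (P s).
Qed.

Lemma sum_Bbar_at (P : pred (Comp n)) x u :
  (\sum_(s | P s) x s *: Bbar n p (val s)) u = if P u then x u else 0.
Proof.
by rewrite sum_ffunE -sum_natr_eq; apply: eq_bigr => s _; rewrite ffunE Bbar_Comp_at.
Qed.

Lemma rev_Comp_eq (s u : Comp n) : (val u == val (rev_Comp s)) = (s == rev_Comp u).
Proof.
by rewrite -(inj_eq val_inj) /= -{1}(revK (val u)) (inj_eq (can_inj (@revK nat))) eq_sym.
Qed.

Lemma ascent_part_at x u : ascent_part x u =
  (if ascent2 u then x u else 0) - (if ascent2 (rev_Comp u) then x (rev_Comp u) else 0).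
Proof.
rewrite /ascent_part sum_ffunE -!sum_natr_eq -sumrB; apply: eq_bigr => s _.
by rewrite !ffunE rev_Comp_eq (inj_eq val_inj) [u == s]eq_sym -mulrBr.
Qed.

Lemma radical_decomposition x : in_rad x ->
  x = ascent_part x + balanced_part x + long_part x.
Proof.
move=> x_rad; apply/ffunP => u; rewrite !ffunE ascent_part_at !sum_Bbar_at.
have pair_u := @coef_rev_Comp_rad n p n_gt0 x u x_rad.
have coef_n := coef_n_rad n_gt0 x_rad.
rewrite -(coef_val x u) in pair_u *.
rewrite /ascent2 /balanced2 /long_comp (_ : val (rev_Comp u) = rev (val u)) // size_rev.
move: (Comp_is_comp u) pair_u; case: (val u) => [|u0 [|u1 [|u2 t]]] /=.
- by case/andP=> _ /eqP n0; exfalso; move: n_gt0; rewrite -n0.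
- by case/andP=> _ /eqP; rewrite /= addn0 => u0n _; subst u0; rewrite coef_n !subr0 !addr0.
- move=> _ /(_ erefl) pair_u; case: ltngtP => _ /=; rewrite ?subr0 ?addr0 ?add0r //.
  by apply/eqP; rewrite -addr_eq0; apply/eqP.
- by move=> _ _; rewrite !subr0 !add0r.
Qed.

Lemma Bbar_Ysp m (s : Comp n) : (m <= size (val s))%N -> Bbar n p (val s) \in Ysp n p m.
Proof.
move=> ms; apply/memv_span/(map_f (fun q : Comp n => Bbar n p (val q))).
by rewrite mem_filter mem_enum andbT.
Qed.

Lemma ascent_part_mem x : ascent_part x \in (Ysp n p 2 :&: Tsp n p)%VS.
Proof.
rewrite memv_cap; apply/andP; split; apply: memv_suml => s /andP[/eqP s2 _]; apply: memvZ.
  by apply: memvB; apply: Bbar_Ysp; rewrite ?size_rev s2.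
apply/memv_span/mapP; exists (s, rev_Comp s) => //.
by rewrite mem_filter mem_enum andbT /= perm_sym perm_rev.
Qed.

Lemma long_part_mem x : long_part x \in Ysp n p 3.
Proof. by apply: memv_suml => s s3; apply/memvZ/Bbar_Ysp. Qed.

Lemma balanced2E (s : Comp n) : balanced2 s -> val s = [:: n./2; n./2].
Proof.
case/andP=> /eqP s2 /eqP s01; have := Comp_is_comp s; move: s2 s01.
case: (val s) => [|a [|b [|? ?]]] //= _ <- /andP[_ /eqP <-].
by rewrite /= addn0 addnn doubleK.
Qed.

Lemma balanced_part_mem x : balanced_part x \in <[Bbar n p [:: n./2; n./2]]>%VS.
Proof. by apply: memv_suml => s s_bal; rewrite balanced2E //; apply/memvZ/memv_line. Qed.

(* The coefficient c of B[m, m] satisfies 2c = 0, and [m, m] is a composition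
   only for n = 2m. *)
Lemma balanced_part_rad x : prime p -> odd n || (p != 2%N) -> in_rad x ->
  balanced_part x = 0.
Proof.
move=> p_prime n_odd_or_p_odd x_rad; apply: big1 => s s_bal.
have sE := balanced2E s_bal.
case/orP: n_odd_or_p_odd => [n_odd | p_neq2].
  have := Comp_is_comp s; rewrite sE => /andP[_ /eqP]; rewrite /= addn0 addnn => n2.
  by exfalso; move: n_odd; rewrite -n2 odd_double.
have s_rev : rev_Comp s = s by apply: val_inj; rewrite /= sE.
have := coef_rev_Comp_rad (s := s) n_gt0 x_rad; rewrite s_rev sE => /(_ erefl) /eqP.
rewrite -mulr2n -mulr_natl mulf_eq0 => /orP[|/eqP ->]; last by rewrite scale0r.
by rewrite -(dvdn_pcharf (pchar_Fp p_prime)) dvdn_prime2 // (negbTE p_neq2).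
Qed.

End RadicalDecomposition.

Local Open Scope ring_scope.

Theorem lemma3p2 (n p : nat) (hn : (1 <= n)%N) (hp : prime p) :
  (odd n || (p != 2%N) ->
     forall x : Sig n p, in_rad x ->
       x \in (Ysp n p 2 :&: Tsp n p + Ysp n p 3)%VS) /\
  (~~ odd n && (p == 2%N) ->
     forall x : Sig n p, in_rad x ->
       x \in (<[Bbar n p [:: n./2; n./2]]> + (Ysp n p 2 :&: Tsp n p)
              + Ysp n p 3)%VS).
Proof.
split=> [n_odd_or_p_odd | _] x x_rad; rewrite (radical_decomposition hn x_rad).
  rewrite (balanced_part_rad hn hp n_odd_or_p_odd x_rad) addr0.
  by rewrite memv_add ?ascent_part_mem ?long_part_mem.
rewrite [ascent_part x + _]addrC.
by rewrite !memv_add ?balanced_part_mem ?ascent_part_mem ?long_part_mem.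
Qed.
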